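(* Let $\mathcal{W}$ be the weight space of an MLP with hidden dimensions $d_1,\dots,d_{L-1}$ and let $G=S_{d_1}\times\dots\times S_{d_{L-1}}$ act on $\mathcal{W}$ by the (orthonormal, linear) neuron-permutation action described in the context. Let $p(\boldsymbol{\omega})$ be a $G$-invariant prior density, and let the likelihood $p(\mathbf{Y}\mid\mathbf{X},\boldsymbol{\omega})$ of a dataset $(\mathbf{X},\mathbf{Y})$ be $G$-invariant in $\boldsymbol{\omega}$ (as holds when it depends on $\boldsymbol{\omega}$ only through the network outputs $\mathbf{f}^{\boldsymbol{\omega}}(\mathbf{x}_i)$). Let $q_\theta(\boldsymbol{\omega})$ be a variational density on $\mathcal{W}$, and define its symmetrization $q_\theta^G(\boldsymbol{\omega})=\frac{1}{|G|}\sum_{g\in G}q_\theta(g^{-1}\cdot\boldsymbol{\omega})$ and the ELBOs $$\mathcal{L}_{\mathrm{VI}}(\theta)=\mathbb{E}_{\boldsymbol{\omega}\sim q_\theta}\log p(\mathbf{Y}\mid\mathbf{X},\boldsymbol{\omega})-\mathrm{KL}(q_\theta\,\|\,p),\qquad \mathcal{L}^G_{\mathrm{VI}}(\theta)=\mathbb{E}_{\boldsymbol{\omega}\sim q^G_\theta}\log p(\mathbf{Y}\mid\mathbf{X},\boldsymbol{\omega})-\mathrm{KL}(q^G_\theta\,\|\,p).$$ Consider the joint distribution of $(g,\boldsymbol{\omega})\in G\times\mathcal{W}$ given by $q_\theta^G(g,\boldsymbol{\omega})=\frac{1}{|G|}q_\theta(g^{-1}\cdot\boldsymbol{\omega})$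 (so $g$ is uniform on $G$ and $\boldsymbol{\omega}\mid g$ has density $q_\theta(g^{-1}\cdot\boldsymbol{\omega})$), whose $\boldsymbol{\omega}$-marginal is $q^G_\theta$. Then (assuming all quantities involved are finite) $$\mathcal{L}^G_{\mathrm{VI}}(\theta)=\mathcal{L}_{\mathrm{VI}}(\theta)+H(q^G_\theta)-H(q_\theta)=\mathcal{L}_{\mathrm{VI}}(\theta)+I(g;\boldsymbol{\omega}),$$ where $H$ denotes differential entropy and $I(g;\boldsymbol{\omega})$ is the mutual information of $g$ and $\boldsymbol{\omega}$ under $q_\theta^G(g,\boldsymbol{\omega})$.
   Context: The MLP weight space is $\mathcal{W}=\bigoplus_{l=1}^L(\mathbb{R}^{d_l\times d_{l-1}}\oplus\mathbb{R}^{d_l})$ with $\boldsymbol{\omega}=(\mathbf{W}_1,\dots,\mathbf{W}_L,\mathbf{b}_1,\dots,\mathbf{b}_L)$ and Euclidean norm. For $g=(\tau_1,\dots,\tau_{L-1})\in G$ with permutation matrices $\mathbf{P}_{\tau_l}$, $g\cdot\boldsymbol{\omega}$ has $\mathbf{W}_1'=\mathbf{P}_{\tau_1}^\top\mathbf{W}_1$, $\mathbf{b}_1'=\mathbf{P}_{\tau_1}^\top\mathbf{b}_1$; $\mathbf{W}_l'=\mathbf{P}_{\tau_l}^\top\mathbf{W}_l\mathbf{P}_{\tau_{l-1}}$, $\mathbf{b}_l'=\mathbf{P}_{\tau_l}^\top\mathbf{b}_l$ for $2\le l\le L-1$; $\mathbf{W}_L'=\mathbf{W}_L\mathbf{P}_{\tau_{L-1}}$,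 $\mathbf{b}_L'=\mathbf{b}_L$. This is a linear norm-preserving action. A function or density $h$ on $\mathcal{W}$ is $G$-invariant if $h(g\cdot\boldsymbol{\omega})=h(\boldsymbol{\omega})$ for all $g\in G,\boldsymbol{\omega}\in\mathcal{W}$. All distributions have densities. *)

From HB Require Import structures.
From mathcomp Require Import all_boot all_order all_algebra all_fingroup.
From mathcomp Require Import all_classical all_reals all_analysis.

Set Implicit Arguments.
Unset Strict Implicit.
Unset Printing Implicit Defensive.

Import Order.TTheory GRing.Theory Num.Theory.
Local Open Scope classical_set_scope.
Local Open Scope ring_scope.

Section MLP.
Variable R : realType.
(* An MLP with L layers; d : 'I_L.+1 -> nat gives d_0 (input), d_1, ..., d_L
   (output).  Layer l : 'I_L stands for the paper's layer l+1, with weight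
   matrix of size d_(l+1) x d_l and bias of size d_(l+1). *)
Variable L : nat.
Variable d : 'I_L.+1 -> nat.

Definition lout (l : 'I_L) : 'I_L.+1 := lift ord0 l.
Definition lin (l : 'I_L) : 'I_L.+1 := widen_ord (leqnSn L) l.

(* Coordinates of the weight space: a weight entry (i,j) or a bias entry i
   of some layer. *)
Definition param := {l : 'I_L & ('I_(d (lout l)) * 'I_(d (lin l)) + 'I_(d (lout l)))%type}.

(* The weight space W = (+)_l (R^{d_l x d_(l-1)} (+) R^{d_l}), realised as
   R^#|param| (tuples carry the product Borel sigma-algebra). *)
Definition Wspace := #|{: param}|.-tuple R.

Definition coord (w : Wspace) (p : param) : R := tnth w (enum_rank p).

Definition Wmat (w : Wspace) (l : 'I_L) : 'M[R]_(d (lout l), d (lin l)) :=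
  \matrix_(i, j) coord w (Tagged _ (inl (i, j))).
Definition Bvec (w : Wspace) (l : 'I_L) : 'cV[R]_(d (lout l)) :=
  \col_i coord w (Tagged _ (inr i)).

Definition build (Wm : forall l : 'I_L, 'M[R]_(d (lout l), d (lin l)))
  (bv : forall l : 'I_L, 'cV[R]_(d (lout l))) : Wspace :=
  [tuple (match enum_val k with
          | existT l (inl ij) => Wm l ij.1 ij.2
          | existT l (inr i) => bv l i ord0
          end) | k < #|{: param}|].

(* The group G = S_(d_1) x ... x S_(d_(L-1)) is the set of those that are the
   identity at the input (m = 0) and output (m = L) layers. *)
Definition permtuple := {dffun forall m : 'I_L.+1, 'S_(d m)}.
Definition Gset : {set permtuple} :=
  [set g : permtuple | (g ord0 == 1%g) && (g ord_max == 1%g)].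

Definition ginv (g : permtuple) : permtuple := [ffun m => ((g m)^-1)%g].

(* The neuron-permutation action of the context:
   W_l' = P_(tau_l)^T W_l P_(tau_(l-1)),  b_l' = P_(tau_l)^T b_l,
   with tau_0 = tau_L = id (so W_1' = P^T W_1, W_L' = W_L P, b_L' = b_L). *)
Definition act (g : permtuple) (w : Wspace) : Wspace :=
  build (fun l => (perm_mx (g (lout l)))^T *m Wmat w l *m perm_mx (g (lin l)))
        (fun l => (perm_mx (g (lout l)))^T *m Bvec w l).

Definition G_invariant (h : Wspace -> R) :=
  forall g, g \in Gset -> forall w, h (act g w) = h w.

Definition is_lebesgue (mu : {measure set Wspace -> \bar R}) :=
  forall a b : 'I_#|{: param}| -> R, (forall k, a k <= b k) ->
    mu [set x : Wspace | forall k, a k < tnth x k <= b k] =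
    (\prod_k (b k - a k))%:E.

Section WithMeasure.
Variable mu : {measure set Wspace -> \bar R}.

Definition is_density (q : Wspace -> R) :=
  [/\ forall w, 0 <= q w, measurable_fun setT q &
      (\int[mu]_w (q w)%:E = 1)%E].

Definition symmetrize (q : Wspace -> R) (w : Wspace) : R :=
  (#|Gset|%:R)^-1 * \sum_(g in Gset) q (act (ginv g) w).

Definition joint (q : Wspace -> R) (g : permtuple) (w : Wspace) : R :=
  (#|Gset|%:R)^-1 * q (act (ginv g) w).

(* differential entropy (with 0 log 0 = 0; ln 0 = 0 in the library) *)
Definition entropy (q : Wspace -> R) : \bar R :=
  (- \int[mu]_w (q w * ln (q w))%:E)%E.

(* KL(q || p) = int q log (q/p), for q absolutely continuous wrt p *)
Definition KL (q p : Wspace -> R) : \bar R :=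
  (\int[mu]_w (q w * (ln (q w) - ln (p w)))%:E)%E.

Definition exp_loglik (q lik : Wspace -> R) : \bar R :=
  (\int[mu]_w (q w * ln (lik w))%:E)%E.

Definition ELBO (q p lik : Wspace -> R) : \bar R :=
  (exp_loglik q lik - KL q p)%E.

(* Mutual information of (g, w) under a joint density j on Gset x W
   (uniform counting on the finite set Gset times mu on W), with marginals
   j_G(g) = int j(g,w) dw and j_W(w) = sum_g j(g,w). *)
Definition margG (j : permtuple -> Wspace -> R) (g : permtuple) : R :=
  fine (\int[mu]_w (j g w)%:E).
Definition margW (j : permtuple -> Wspace -> R) (w : Wspace) : R :=
  \sum_(g in Gset) j g w.
Definition MI_integrand (j : permtuple -> Wspace -> R) g w : R :=
  j g w * (ln (j g w) - ln (margG j g * margW j w)).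
Definition mutual_info (j : permtuple -> Wspace -> R) : \bar R :=
  (\sum_(g in Gset) \int[mu]_w (MI_integrand j g w)%:E)%E.

End WithMeasure.
End MLP.

From Pilot Require Import Defs.
From HB Require Import structures.
From mathcomp Require Import all_boot all_order all_algebra all_fingroup.
From mathcomp Require Import all_classical all_reals all_analysis.
From mathcomp Require Import measurable_realfun ring.

(* Neuron permutations act on the weight space by permuting coordinates, so
   they preserve Lebesgue measure (a measure giving every box its volume is
   unique) and hence integrals.  Averaging over G therefore does not change
   the integral of q against a G-invariant function: with log p and log lik
   this shows that the expected log-likelihood and the cross-entropy terms of
   the two ELBOs agree, so only the entropies differ.  For the mutual
   information, the joint density has g-marginal 1/|G| and w-marginal q^G, so
   its integrand is (1/|G|) q(g^-1 w) log q(g^-1 w) - q^G(g, w) log q^G(w);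
   integrating and summing over g gives H(q^G) - H(q). *)

Set Implicit Arguments.
Unset Strict Implicit.
Unset Printing Implicit Defensive.

Import Order.TTheory GRing.Theory Num.Theory.
Local Open Scope classical_set_scope.
Local Open Scope ring_scope.

Section boxes.
Variables (R : realType) (n : nat).

Definition box (a b : 'I_n -> R) : set (n.-tuple R) :=
  [set x | forall k, a k < tnth x k <= b k].

Definition boxes : set (set (n.-tuple R)) := [set A | exists a b, A = box a b].

Definition box_volume (m : {measure set (n.-tuple R) -> \bar R}) :=
  forall a b, (forall k, a k <= b k) -> m (box a b) = (\prod_k (b k - a k))%:E.

Lemma measurable_box a b : measurable (box a b).
Proof.
pose F (k : nat) : set (n.-tuple R) := if insub k is Some i
  then [set x | a i < tnth x i <= b i] else setT.
have -> : box a b = \bigcap_k F k.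
  apply/seteqP; split => x /=.
    by move=> xab k _; rewrite /F; case: insubP => // i _ _; exact: xab.
  by move=> xF k; have := xF (val k) I; rewrite /F valK.
apply: bigcapT_measurable => k; rewrite /F; case: insubP => // i _ _.
have := measurable_tnth (T:=R) i measurableT (measurable_itv `]a i, b i]).
by rewrite setTI.
Qed.

Lemma tuple_bounded (x : n.-tuple R) : exists N : nat, forall k, `|tnth x k| < N%:R.
Proof.
pose S := \sum_k `|tnth x k|.
have S0 : 0 <= S by apply: sumr_ge0.
exists (Num.bound S) => k; apply: le_lt_trans (archi_boundP S0).
by rewrite /S (bigD1 k) //= lerDl sumr_ge0.
Qed.

Lemma sigma_boxes_slab (i : 'I_n) (a b : R) :
  <<s boxes >> ([set: n.-tuple R] `&` (fun x => tnth x i) @^-1` `]a, b]%classic).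
Proof.
pose aN (N : nat) k := if k == i then a else - N%:R.
pose bN (N : nat) k := if k == i then b else N%:R.
have -> : [set: n.-tuple R] `&` (fun x => tnth x i) @^-1` `]a, b]%classic =
    \bigcup_N box (aN N) (bN N).
  apply/seteqP; split => x /=.
    move=> [_]; rewrite in_itv /= => xab.
    have [N xN] := tuple_bounded x; exists N => // k.
    rewrite /aN /bN; case: eqP => [->//|_].
    by have := xN k; rewrite ltr_norml => /andP[-> /ltW ->].
  by move=> [N _ xN]; split => //; have := xN i; rewrite /aN /bN eqxx in_itv.
apply: sigma_algebra_bigcup => N; apply: sub_sigma_algebra.
by exists (aN N), (bN N).
Qed.

Lemma measurable_tuple_boxes :
  (measurable : set (set (n.-tuple R))) = <<s boxes >>.
Proof.
apply/seteqP; split; last first.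
  apply: smallest_sub; first exact: sigma_algebra_measurable.
  by move=> _ [a [b ->]]; exact: measurable_box.
apply: smallest_sub; first exact: smallest_sigma_algebra.
rewrite -bigcup_seq => A [i _ [B mB <-]].
have : B \in image_set_system setT (fun x : n.-tuple R => tnth x i) <<s boxes >>.
  apply/mem_set; move: B mB; apply: smallest_sub.
    exact: sigma_algebra_image (smallest_sigma_algebra setT boxes).
  by move=> _ [[x y] _ <-]; exact: sigma_boxes_slab.
by rewrite inE.
Qed.

Lemma setI_closed_boxes : setI_closed boxes.
Proof.
move=> _ _ [a [b ->]] [a' [b' ->]].
exists (fun k => Num.max (a k) (a' k)), (fun k => Num.min (b k) (b' k)).
apply/seteqP; split => x /=.
  move=> [xab xab'] k; move: (xab k) (xab' k) => /andP[? ?] /andP[? ?].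
  by rewrite gt_max le_min; repeat (apply/andP; split).
move=> xm; split => k; move: (xm k);
  by rewrite gt_max le_min => /andP[/andP[? ?] /andP[? ?]]; apply/andP.
Qed.

Lemma box_set0 a b k : b k < a k -> box a b = set0.
Proof.
move=> ba; apply/seteqP; split => x //= /(_ k) /andP[ax xb].
by have := lt_le_trans ax xb; rewrite ltNge (ltW ba).
Qed.

Lemma box_volume_unique (m1 m2 : {measure set (n.-tuple R) -> \bar R}) :
  box_volume m1 -> box_volume m2 -> forall A, measurable A -> m1 A = m2 A.
Proof.
move=> m1box m2box A mA.
pose cube (N : nat) := box (fun=> - N%:R) (fun=> N%:R).
have cube_le N : - N%:R <= (N%:R : R) by rewrite lerNl; exact: le_trans (ler0n _ _).
apply: (measure_unique boxes cube) => //.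
- exact: measurable_tuple_boxes.
- exact: setI_closed_boxes.
- by move=> N; exists (fun=> - N%:R), (fun=> N%:R).
- apply/seteqP; split => x // _.
  have [N xN] := tuple_bounded x; exists N => // k.
  by have := xN k; rewrite ltr_norml => /andP[-> /ltW ->].
- move=> _ [a [b ->]].
  have [ab|] := pselect (forall k, a k <= b k); first by rewrite m1box // m2box.
  move=> /existsNP [k /negP]; rewrite -ltNge => ba.
  by rewrite (box_set0 ba) !measure0.
- by move=> N; rewrite m1box // ltry.
Qed.

Definition tuple_perm (s : {perm 'I_n}) (x : n.-tuple R) : n.-tuple R :=
  [tuple tnth x (s k) | k < n].

Lemma measurable_tuple_perm s : measurable_fun [set: n.-tuple R] (tuple_perm s).
Proof.
apply/measurable_fun_tnthP => k.
have -> : (fun x => tnth x k) \o tuple_perm s = (fun x => tnth x (s k)).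
  by apply: funext => x /=; rewrite tnth_mktuple.
exact: measurable_tnth.
Qed.

Lemma tuple_perm_preimage_box s a b :
  tuple_perm s @^-1` box a b = box (a \o (s^-1)%g) (b \o (s^-1)%g).
Proof.
apply/seteqP; split => x /= xab k.
  by have := xab ((s^-1)%g k); rewrite tnth_mktuple permKV.
by rewrite tnth_mktuple; have := xab (s k); rewrite /= permK.
Qed.

Lemma box_volume_tuple_perm (m : {measure set (n.-tuple R) -> \bar R}) s :
  box_volume m -> forall A, measurable A -> m (tuple_perm s @^-1` A) = m A.
Proof.
move=> mbox; apply: (box_volume_unique (m1 := pushforward m (tuple_perm s))) => //.
  exact: measurable_tuple_perm.
(* the measure structure of the pushforward is built from this proof *)
move=> mphi a b ab; change (m (tuple_perm s @^-1` box a b) = (\prod_k (b k - a k))%:E).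
rewrite tuple_perm_preimage_box mbox => [|k]; last exact: ab.
by congr (_%:E); rewrite [RHS](reindex_inj (@perm_inj _ (s^-1)%g)).
Qed.

End boxes.

Section Rintegral_extra.
Context d (T : measurableType d) (R : realType).
Variable mu : {measure set T -> \bar R}.

Lemma Rintegral_EFin (f : T -> R) : mu.-integrable setT (EFin \o f) ->
  (\int[mu]_x (f x)%:E)%E = (\int[mu]_x f x)%:E.
Proof. by move=> intf; rewrite /Rintegral fineK //; exact: integrable_fin_num. Qed.

Lemma integrableZl_EFin k (f : T -> R) : mu.-integrable setT (EFin \o f) ->
  mu.-integrable setT (EFin \o (fun x => k * f x)).
Proof. by move=> /(integrableZl measurableT k); apply: eq_integrable. Qed.

Lemma integrableB_EFin (f g : T -> R) : mu.-integrable setT (EFin \o f) ->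
  mu.-integrable setT (EFin \o g) -> mu.-integrable setT (EFin \o (f \- g)).
Proof. by move=> intf intg; apply: eq_integrable (integrableB measurableT intf intg). Qed.

Lemma Rintegral_sum I (s : seq I) (P : pred I) (f : I -> T -> R) :
  (forall i, P i -> mu.-integrable setT (EFin \o f i)) ->
  \int[mu]_x (\sum_(i <- s | P i) f i x) = \sum_(i <- s | P i) \int[mu]_x f i x.
Proof.
move=> intf; elim: s => [|i s IHs].
  under eq_Rintegral do rewrite big_nil.
  by rewrite big_nil Rintegral_cst // mul0r.
under eq_Rintegral do rewrite big_cons.
rewrite big_cons; case: ifP => Pi //.
have intS : mu.-integrable setT (EFin \o (fun x => \sum_(j <- s | P j) f j x)).
  rewrite (_ : _ \o _ = fun x => \sum_(j <- s | P j) (f j x)%:E)%E.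
    by apply: integrable_sum => // j /intf.
  by apply: funext => x /=; rewrite sumEFin.
by rewrite RintegralD // ?IHs //; exact: intf.
Qed.

End Rintegral_extra.

Section measure_preserving.
Context d (T : measurableType d) (R : realType).
Variable mu : {measure set T -> \bar R}.
Variable phi : T -> T.
Hypothesis mphi : measurable_fun setT phi.
Hypothesis phi_preserving : forall A, measurable A -> mu (phi @^-1` A) = mu A.

Let mu_pushforward A : measurable A -> A `<=` setT ->
  mu A = pushforward mu phi A.
Proof. by move=> mA _; rewrite /pushforward phi_preserving. Qed.

Lemma integrable_comp_preserving (f : T -> R) :
  mu.-integrable setT (EFin \o f) -> mu.-integrable setT (EFin \o (f \o phi)).
Proof.
move=> intf; have mf := measurable_int _ intf.
have mfphi : measurable_fun setT (EFin \o (f \o phi)).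
  by apply/measurable_EFinP/measurableT_comp => //; exact/measurable_EFinP.
apply/integrableP; split => //; have [_] := integrableP _ _ _ intf.
rewrite (eq_measure_integral (pushforward mu phi) mu_pushforward).
by rewrite ge0_integral_pushforward //; exact: measurableT_comp.
Qed.

Lemma Rintegral_comp_preserving (f : T -> R) :
  mu.-integrable setT (EFin \o f) -> \int[mu]_x f (phi x) = \int[mu]_x f x.
Proof.
move=> intf; have mf := measurable_int _ intf.
rewrite /Rintegral [in RHS](eq_measure_integral (pushforward mu phi) mu_pushforward).
rewrite [in RHS]integral_pushforward ?preimage_setT //.
exact: integrable_comp_preserving.
Qed.

End measure_preserving.

Section neuron_permutation.
Variables (R : realType) (L : nat) (d : 'I_L.+1 -> nat).
Local Notation Wspace := (Wspace R d).
Local Notation N := #|{: param d}|.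

Definition act_param (g : permtuple d) (p : param d) : param d :=
  match p with
  | existT l (inl ij) =>
      existT _ l (inl (((g (lout l))^-1)%g ij.1, ((g (lin l))^-1)%g ij.2))
  | existT l (inr i) => existT _ l (inr (((g (lout l))^-1)%g i))
  end.

Lemma act_paramK g : cancel (act_param g) (act_param (ginv g)).
Proof. case=> l [[i j]|i]; by rewrite /= !ffunE ?invgK !permKV. Qed.

Lemma coord_build Wm bv (p : param d) : Defs.coord (build (R:=R) Wm bv) p =
  match p with
  | existT l (inl ij) => Wm l ij.1 ij.2
  | existT l (inr i) => bv l i ord0
  end.
Proof. by rewrite /Defs.coord /build tnth_mktuple enum_rankK. Qed.

Lemma coord_act g (w : Wspace) p :
  Defs.coord (Defs.act g w) p = Defs.coord w (act_param g p).
Proof.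
rewrite /Defs.act coord_build; case: p => l [[i j]|i] /=.
  have mul_perm_mx m n (s : 'S_n) (A : 'M[R]_(m, n)) : A *m perm_mx s = col_perm s^-1 A.
    by rewrite col_permE invgK.
  by rewrite tr_perm_mx -row_permE mul_perm_mx !mxE.
by rewrite tr_perm_mx -row_permE !mxE.
Qed.

Definition act_rank g (k : 'I_N) : 'I_N := enum_rank (act_param g (enum_val k)).

Lemma act_rank_inj g : injective (act_rank g).
Proof. by move=> k k' /enum_rank_inj /(can_inj (act_paramK g)) /enum_val_inj. Qed.

Definition act_perm g : {perm 'I_N} := perm (@act_rank_inj g).

Lemma act_tuple_perm g : Defs.act g = tuple_perm (act_perm g) :> (Wspace -> Wspace).
Proof.
apply: funext => w; apply: eq_from_tnth => k.
by rewrite [RHS]tnth_mktuple permE -[in LHS](enum_valK k) -/(Defs.coord _ _) coord_act.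
Qed.

Variable mu : {measure set Wspace -> \bar R}.
Hypothesis lebesgue_mu : is_lebesgue mu.

(* [is_lebesgue mu] is [box_volume mu] by conversion. *)
Lemma integrable_act g (F : Wspace -> R) : mu.-integrable setT (EFin \o F) ->
  mu.-integrable setT (fun w => (F (Defs.act g w))%:E).
Proof.
rewrite act_tuple_perm; apply: integrable_comp_preserving.
  exact: measurable_tuple_perm.
exact: box_volume_tuple_perm.
Qed.

Lemma Rintegral_act g (F : Wspace -> R) : mu.-integrable setT (EFin \o F) ->
  \int[mu]_w F (Defs.act g w) = \int[mu]_w F w.
Proof.
rewrite act_tuple_perm; apply: Rintegral_comp_preserving.
  exact: measurable_tuple_perm.
exact: box_volume_tuple_perm.
Qed.

End neuron_permutation.

Section symmetrization.
Variables (R : realType) (L : nat) (d : 'I_L.+1 -> nat).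
Local Notation Wspace := (Wspace R d).
Local Notation G := (Gset d).
Local Notation c := ((#|G|%:R : R)^-1).

Lemma one_in_Gset : ([ffun=> 1%g] : permtuple d) \in G.
Proof. by rewrite inE !ffunE !eqxx. Qed.

Lemma card_Gset_gt0 : (0 < #|G|)%N.
Proof. by apply/card_gt0P; exists [ffun=> 1%g]; exact: one_in_Gset. Qed.

Lemma mulrn_invcardG (x : R) : c * x *+ #|G| = x.
Proof.
by rewrite -mulrnAl -[c *+ _]mulr_natr mulVf ?mul1r // pnatr_eq0 -lt0n card_Gset_gt0.
Qed.

Lemma ginv_Gset g : g \in G -> ginv g \in G.
Proof. by rewrite !inE !ffunE => /andP[/eqP -> /eqP ->]; rewrite !invg1 !eqxx. Qed.

Lemma G_invariant_ginv (h : Wspace -> R) g w :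
  G_invariant h -> g \in G -> h (Defs.act (ginv g) w) = h w.
Proof. by move=> hG gG; apply: hG; exact: ginv_Gset. Qed.

Lemma G_invariant_comp (f : R -> R) (h : Wspace -> R) :
  G_invariant h -> G_invariant (f \o h).
Proof. by move=> hG g gG w /=; rewrite hG. Qed.

Variable mu : {measure set Wspace -> \bar R}.
Hypothesis lebesgue_mu : is_lebesgue mu.

Lemma Rintegral_symmetrize (F : Wspace -> R) : mu.-integrable setT (EFin \o F) ->
  \int[mu]_w (c * \sum_(g in G) F (Defs.act (ginv g) w)) = \int[mu]_w F w.
Proof.
move=> intF; under eq_Rintegral do rewrite mulr_sumr.
rewrite Rintegral_sum; last by move=> g _; exact/integrableZl_EFin/integrable_act.
rewrite (eq_bigr (fun=> c * \int[mu]_w F w)); last first.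
  by move=> g _; rewrite RintegralZl ?Rintegral_act //; exact: integrable_act.
by rewrite sumr_const mulrn_invcardG.
Qed.

Lemma Rintegral_symmetrize_mul (q h : Wspace -> R) : G_invariant h ->
  mu.-integrable setT (EFin \o (fun w => q w * h w)) ->
  \int[mu]_w (symmetrize q w * h w) = \int[mu]_w (q w * h w).
Proof.
move=> hG intqh; rewrite -[RHS]Rintegral_symmetrize //; apply: eq_Rintegral => w _.
rewrite /symmetrize -mulrA mulr_suml; congr (_ * _); apply: eq_bigr => g gG.
by rewrite (G_invariant_ginv _ hG gG).
Qed.

End symmetrization.

Section information.
Variables (R : realType) (L : nat) (d : 'I_L.+1 -> nat).
Local Notation Wspace := (Wspace R d).
Local Notation G := (Gset d).
Local Notation c := ((#|G|%:R : R)^-1).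
Variable mu : {measure set Wspace -> \bar R}.

Lemma integrable_cross_entropy (r p : Wspace -> R) :
  mu.-integrable setT (fun w => (r w * ln (r w))%:E) ->
  mu.-integrable setT (fun w => (r w * (ln (r w) - ln (p w)))%:E) ->
  mu.-integrable setT (fun w => (r w * ln (p w))%:E).
Proof.
move=> irr irp; apply: eq_integrable (integrableB_EFin irr irp) => // w _.
by congr EFin; rewrite /= mulrBr opprB addrC subrK.
Qed.

Lemma entropy_Rintegral (r : Wspace -> R) :
  mu.-integrable setT (fun w => (r w * ln (r w))%:E) ->
  entropy mu r = (- \int[mu]_w (r w * ln (r w)))%:E.
Proof. by move=> irr; rewrite /entropy Rintegral_EFin. Qed.

Lemma ELBO_Rintegral (r p lik : Wspace -> R) :
  mu.-integrable setT (fun w => (r w * ln (lik w))%:E) ->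
  mu.-integrable setT (fun w => (r w * ln (r w))%:E) ->
  mu.-integrable setT (fun w => (r w * (ln (r w) - ln (p w)))%:E) ->
  ELBO mu r p lik = (\int[mu]_w (r w * ln (lik w)) +
    \int[mu]_w (r w * ln (p w)) - \int[mu]_w (r w * ln (r w)))%:E.
Proof.
move=> irl irr irp; have irp' := integrable_cross_entropy irr irp.
rewrite /ELBO /exp_loglik /KL !Rintegral_EFin // -EFinB; congr EFin.
have -> : \int[mu]_w (r w * (ln (r w) - ln (p w))) =
    \int[mu]_w (r w * ln (r w)) - \int[mu]_w (r w * ln (p w)).
  by rewrite -RintegralB //; apply: eq_Rintegral => w _; rewrite mulrBr.
by rewrite opprB addrA.
Qed.

Lemma integrable_density (r : Wspace -> R) :
  is_density mu r -> mu.-integrable setT (EFin \o r).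
Proof.
move=> [r_ge0 mr intr1]; apply/integrableP; split; first exact/measurable_EFinP.
under eq_integral do rewrite gee0_abs ?lee_fin //.
by rewrite intr1 ltry.
Qed.

Hypothesis lebesgue_mu : is_lebesgue mu.
Variable q : Wspace -> R.
Hypothesis density_q : is_density mu q.
Local Notation qG := (symmetrize q).

Lemma joint_le_symmetrize g w : g \in G -> joint q g w <= qG w.
Proof.
move=> gG; have [q_ge0 _ _] := density_q.
rewrite /joint /symmetrize ler_pM2l ?invr_gt0 ?ltr0n ?card_Gset_gt0 //.
by rewrite (bigD1 g) //= lerDl sumr_ge0.
Qed.

Lemma margG_joint g : margG mu (joint q) g = c.
Proof.
have intq := integrable_density density_q; have [_ _ intq1] := density_q.
rewrite /margG /joint -/(Rintegral _ _ _) RintegralZl //; last exact: integrable_act.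
by rewrite Rintegral_act // /Rintegral intq1 mulr1.
Qed.

Lemma margW_joint w : margW (joint q) w = qG w.
Proof. by rewrite /margW /joint /symmetrize mulr_sumr. Qed.

Lemma MI_integrand_joint g w : g \in G -> MI_integrand mu (joint q) g w =
  c * (q (Defs.act (ginv g) w) * ln (q (Defs.act (ginv g) w))) - joint q g w * ln (qG w).
Proof.
move=> gG; have [q_ge0 _ _] := density_q.
have := joint_le_symmetrize w gG.
rewrite /MI_integrand margG_joint margW_joint /joint.
have c_gt0 : 0 < c by rewrite invr_gt0 ltr0n card_Gset_gt0.
set x := q _; have [->|x_neq0] := eqVneq x 0; first by rewrite !(mulr0, mul0r) subrr.
move=> cx_le_qG; have x_gt0 : 0 < x by rewrite lt0r x_neq0 q_ge0.
have qG_gt0 : 0 < qG w by apply: lt_le_trans cx_le_qG; exact: mulr_gt0.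
by rewrite (lnM (x:=c) (y:=x)) ?posrE // (lnM (x:=c) (y:=qG w)) ?posrE //; ring.
Qed.

Lemma integrable_joint_mul_ln g : g \in G ->
  mu.-integrable setT (fun w => (q w * ln (q w))%:E) ->
  mu.-integrable setT (fun w => (MI_integrand mu (joint q) g w)%:E) ->
  mu.-integrable setT (fun w => (joint q g w * ln (qG w))%:E).
Proof.
move=> gG iqq iMI.
have iqqg := integrableZl_EFin c (integrable_act lebesgue_mu (ginv g) iqq).
apply: eq_integrable (integrableB_EFin iqqg iMI) => // w _.
by rewrite /= MI_integrand_joint // opprB addrC subrK.
Qed.

Lemma Rintegral_MI_integrand_joint g : g \in G ->
  mu.-integrable setT (fun w => (q w * ln (q w))%:E) ->
  mu.-integrable setT (fun w => (MI_integrand mu (joint q) g w)%:E) ->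
  \int[mu]_w MI_integrand mu (joint q) g w =
    c * \int[mu]_w (q w * ln (q w)) - \int[mu]_w (joint q g w * ln (qG w)).
Proof.
move=> gG iqq iMI; have iqqg := integrable_act lebesgue_mu (ginv g) iqq.
rewrite -(Rintegral_act lebesgue_mu (ginv g) iqq) -RintegralZl // -RintegralB //.
- by apply: eq_Rintegral => w _; rewrite MI_integrand_joint.
- exact: integrableZl_EFin.
- exact: integrable_joint_mul_ln.
Qed.

Lemma mutual_info_joint :
  mu.-integrable setT (fun w => (q w * ln (q w))%:E) ->
  (forall g, g \in G ->
    mu.-integrable setT (fun w => (MI_integrand mu (joint q) g w)%:E)) ->
  mutual_info mu (joint q) =
    (\int[mu]_w (q w * ln (q w)) - \int[mu]_w (qG w * ln (qG w)))%:E.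
Proof.
move=> iqq iMI; rewrite /mutual_info.
rewrite (eq_bigr (fun g => (\int[mu]_w MI_integrand mu (joint q) g w)%:E)); last first.
  by move=> g gG; exact: (Rintegral_EFin (iMI g gG)).
rewrite sumEFin (eq_bigr _ (fun g gG => Rintegral_MI_integrand_joint gG iqq (iMI g gG))).
rewrite sumrB sumr_const mulrn_invcardG -Rintegral_sum; last first.
  by move=> g gG; exact: (integrable_joint_mul_ln gG iqq (iMI g gG)).
congr (_ - _)%:E; apply: eq_Rintegral => w _.
by rewrite -mulr_suml -[X in X * _ = _]/(margW _ _) margW_joint.
Qed.

End information.

Theorem theorem4p1 (R : realType) (L : nat) (d : 'I_L.+1 -> nat)
    (mu : {measure set (Wspace R d) -> \bar R})
    (p lik q : Wspace R d -> R) :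
  is_lebesgue mu ->
  is_density mu p -> G_invariant p ->
  (forall w, 0 <= lik w) -> measurable_fun setT lik -> G_invariant lik ->
  is_density mu q ->
  (* finiteness of all quantities involved *)
  {ae mu, forall w, 0 < q w -> 0 < p w} ->
  {ae mu, forall w, 0 < q w -> 0 < lik w} ->
  mu.-integrable setT (fun w => (q w * ln (lik w))%:E) ->
  mu.-integrable setT (fun w => (symmetrize q w * ln (lik w))%:E) ->
  mu.-integrable setT (fun w => (q w * (ln (q w) - ln (p w)))%:E) ->
  mu.-integrable setT
    (fun w => (symmetrize q w * (ln (symmetrize q w) - ln (p w)))%:E) ->
  mu.-integrable setT (fun w => (q w * ln (q w))%:E) ->
  mu.-integrable setT (fun w => (symmetrize q w * ln (symmetrize q w))%:E) ->
  (forall g, g \in Gset d ->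
     mu.-integrable setT (fun w => (MI_integrand mu (joint q) g w)%:E)) ->
  ELBO mu (symmetrize q) p lik =
    (ELBO mu q p lik + (entropy mu (symmetrize q) - entropy mu q))%E /\
  ELBO mu (symmetrize q) p lik =
    (ELBO mu q p lik + mutual_info mu (joint q))%E.
Proof.
move=> leb _ p_inv _ _ lik_inv dq _ _ iqlik iqGlik iqp iqGp iqq iqGqG iMI.
rewrite !ELBO_Rintegral // !entropy_Rintegral // mutual_info_joint //.
rewrite (Rintegral_symmetrize_mul leb (G_invariant_comp (@ln R) lik_inv) iqlik).
rewrite (Rintegral_symmetrize_mul leb (G_invariant_comp (@ln R) p_inv)
  (integrable_cross_entropy iqq iqp)).
by split; rewrite -?EFinB -!EFinD; congr EFin; ring.
Qed.
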